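(* Let $d\ge 2$, let $\pi$ be a permutation of $\{0,1,\dots,d-1\}$ with $\pi(0)=0$, and let $a^{(0)},\dots,a^{(d-1)}$ be positive semidefinite complex $d\times d$ matrices with $\mathrm{Tr}\big(a^{(0)}+\dots+a^{(d-1)}\big)=1$. Let $$\rho_\pi=\sum_{\alpha=0}^{d-1}\sum_{i,j=0}^{d-1} a^{(\alpha)}_{ij}\, e_{ij}\otimes e_{\pi(i)+\alpha,\ \pi(j)+\alpha},$$ which is a state on $\mathbb{C}^d\otimes\mathbb{C}^d$, and define $d\times d$ matrices $\widetilde a^{(\gamma)}$, $\gamma=0,\dots,d-1$, by $\widetilde a^{(\gamma)}_{ij}=a^{(\gamma-\pi(i)-\pi(j))}_{ij}$ (superscript mod $d$). Then $\rho_\pi$ is PPT if and only if $\widetilde a^{(\gamma)}\ge 0$ for every $\gamma=0,\dots,d-1$.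
   Context: $\{e_0,\dots,e_{d-1}\}$ is the computational basis of $\mathbb{C}^d$, $e_{ij}=|e_i\rangle\langle e_j|$, and all indices of basis vectors are taken mod $d$. For an operator $\rho$ on $\mathbb{C}^d\otimes\mathbb{C}^d$, $\rho^\tau=(\mathrm{id}\otimes\tau)\rho$ denotes the partial transposition with respect to the second factor, where $\tau$ is transposition in the computational basis, i.e. $(\mathrm{id}\otimes\tau)(A\otimes B)=A\otimes B^{T}$. A state $\rho$ is called PPT if $\rho^\tau\ge 0$. *)

From HB Require Import structures.
From mathcomp Require Import all_boot all_order all_algebra all_fingroup.
Set Implicit Arguments. Unset Strict Implicit. Unset Printing Implicit Defensive.
Import Order.TTheory GRing.Theory Num.Theory.
Local Open Scope ring_scope.

(* Decompose an index of C^m (x) C^n (of size m*n) into its pair of indices,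
   inverse to mathcomp's [mxvec_index]. *)
Definition tidx (m n : nat) (p : 'I_(m * n)) : 'I_m * 'I_n :=
  enum_val (cast_ord (esym (mxvec_cast m n)) p).

(* Kronecker product A (x) B, entries indexed by (mxvec_index i k, mxvec_index j l). *)
Definition tensmx (R : pzRingType) (m n p q : nat)
  (A : 'M[R]_(m, n)) (B : 'M[R]_(p, q)) : 'M[R]_(m * p, n * q) :=
  \matrix_(r, c) (A (tidx r).1 (tidx c).1 * B (tidx r).2 (tidx c).2).

(* Partial transposition (id (x) tau) w.r.t. the second factor:
   (id (x) tau)(A (x) B) = A (x) B^T. *)
Definition ptrans (R : pzRingType) (d : nat) (M : 'M[R]_(d * d)) : 'M[R]_(d * d) :=
  \matrix_(r, c) M (mxvec_index (tidx r).1 (tidx c).2)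
                   (mxvec_index (tidx c).1 (tidx r).2).

Definition psd (C : numClosedFieldType) (n : nat) (A : 'M[C]_n) : Prop :=
  forall v : 'cV[C]_n, 0 <= ((map_mx Num.conj v)^T *m A *m v) 0 0.

Definition addI (d : nat) (i : 'I_d) (k : nat) : 'I_d :=
  Ordinal (ltn_pmod (i + k)%N (leq_ltn_trans (leq0n i) (ltn_ord i))).

Definition rho_pi (C : numClosedFieldType) (d : nat) (pi : 'S_d)
  (a : 'I_d -> 'M[C]_d) : 'M[C]_(d * d) :=
  \sum_(alpha < d) \sum_(i < d) \sum_(j < d)
     a alpha i j *: tensmx (delta_mx i j)
                           (delta_mx (addI (pi i) alpha) (addI (pi j) alpha)).

(* tilde a^(gamma)_{ij} = a^(gamma - pi(i) - pi(j) mod d)_{ij} *)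
Definition atilde (C : numClosedFieldType) (d : nat) (pi : 'S_d)
  (a : 'I_d -> 'M[C]_d) (gamma : 'I_d) : 'M[C]_d :=
  \matrix_(i, j) a (addI gamma ((d - pi i) + (d - pi j))%N) i j.

From HB Require Import structures.
From mathcomp Require Import all_boot all_order all_algebra all_fingroup.
Import Order.TTheory GRing.Theory Num.Theory.
Local Open Scope ring_scope.

Set Implicit Arguments. Unset Strict Implicit. Unset Printing Implicit Defensive.

(* Write q_A(v) = v^* A v.  Expanding the partial transpose of
   rho_pi entrywise, for a vector v of C^d (x) C^d
     q_{rho_pi^tau}(v) = sum_{i,j,alpha} a^(alpha)_ij
                           conj(v_{i, pi(j)+alpha}) v_{j, pi(i)+alpha}.
   Reindexing alpha = gamma - pi(i) - pi(j) turns the inner sum into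
     q_{rho_pi^tau}(v) = sum_gamma q_{tilde a^(gamma)}(w_gamma),
   where the "slice" w_gamma of v has components (w_gamma)_i = v_{i, gamma-pi(i)}.
   Each coordinate (i, k) of v lies in exactly one slice (gamma = k + pi(i)),
   so the slices of v are arbitrary and independent: the sum is nonnegative
   for all v iff every summand is nonnegative for all w_gamma. *)

Lemma tidxK m n (i : 'I_m) (j : 'I_n) : tidx (mxvec_index i j) = (i, j).
Proof. by rewrite /tidx /mxvec_index cast_ordK enum_rankK. Qed.

Lemma sum_mxvec (R : nmodType) m n (F : 'I_(m * n) -> R) :
  \sum_r F r = \sum_i \sum_j F (mxvec_index i j).
Proof.
rewrite pair_bigA /= (reindex (fun p : 'I_m * 'I_n => mxvec_index p.1 p.2)) //=.
have [g gK Kg] := @curry_mxvec_bij m n.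
exists g => [[i j] _ | k _]; first exact: (gK (i, j)).
by have := Kg k isT; case: (g k).
Qed.

Lemma sum2_delta (R : pzRingType) d (g : 'I_d -> 'I_d -> R) x y :
  \sum_(k < d) \sum_(l < d) g k l * ((l == x) && (k == y))%:R = g y x.
Proof.
rewrite (bigD1 y) //= [X in _ + X]big1 => [|k nk]; last first.
  by rewrite big1 // => l _; rewrite (negbTE nk) andbF mulr0.
rewrite addr0 (bigD1 x) //= [X in _ + X]big1 => [|l nl]; last first.
  by rewrite (negbTE nl) mulr0.
by rewrite !eqxx mulr1 addr0.
Qed.

Section AdditionModD.
Variable d : nat.
Implicit Types (x y : 'I_d) (m n : nat).

Lemma addI_val x m : val (addI x m) = ((x + m) %% d)%N.
Proof. by []. Qed.

Lemma addI_congr x m n : m = n %[mod d] -> addI x m = addI x n.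
Proof. by move=> e; apply: val_inj; rewrite !addI_val -modnDmr e modnDmr. Qed.

Lemma addI0 x : addI x 0 = x.
Proof. by apply: val_inj; rewrite addI_val addn0 modn_small. Qed.

Lemma addIA x m n : addI (addI x m) n = addI x (m + n).
Proof. by apply: val_inj; rewrite !addI_val modnDml addnA. Qed.

Lemma addIC x y : addI x y = addI y x.
Proof. by apply: val_inj; rewrite !addI_val addnC. Qed.

Lemma addI_inj m : injective (fun x => addI x m).
Proof.
move=> x y /(congr1 val) /= /eqP; rewrite eqn_modDr => /eqP.
by rewrite !modn_small // => /val_inj.
Qed.

Lemma addI_bij m n : (m + n = 0 %[mod d])%N -> bijective (fun x => addI x m).
Proof.
move=> opp_mn; exists (fun x => addI x n) => x; rewrite addIA.
  by rewrite (addI_congr _ opp_mn) addI0.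
by rewrite addnC (addI_congr _ opp_mn) addI0.
Qed.

(* The shift gamma |-> gamma - p - q used in the definition of [atilde]. *)
Definition shift2 (p q : 'I_d) : nat := ((d - p) + (d - q))%N.

Lemma shift2C p q : shift2 p q = shift2 q p.
Proof. by rewrite /shift2 addnC. Qed.

Lemma shift2_bij p q : bijective (fun x => addI x (shift2 p q)).
Proof.
apply: (@addI_bij _ (p + q)).
rewrite /shift2 addnACA !subnK ?(ltnW (ltn_ord _)) //.
by rewrite modnDl modnn mod0n.
Qed.

Lemma addI_shift2 p q x : addI q (addI x (shift2 p q)) = addI x (d - p).
Proof.
rewrite addIC addIA; apply: addI_congr.
by rewrite /shift2 -addnA subnK ?(ltnW (ltn_ord _)) // modnDr.
Qed.

Lemma addI_shift2r p q x : addI p (addI x (shift2 p q)) = addI x (d - q).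
Proof. by rewrite shift2C addI_shift2. Qed.

End AdditionModD.

Section QuadraticForm.
Variable C : numClosedFieldType.

Definition qf n (A : 'M[C]_n) (v : 'cV[C]_n) : C :=
  ((map_mx Num.conj v)^T *m A *m v) 0 0.

Lemma psdE n (A : 'M[C]_n) : psd A <-> forall v, 0 <= qf A v.
Proof. by []. Qed.

Lemma qfE n (A : 'M[C]_n) v :
  qf A v = \sum_i \sum_j (v i 0)^* * A i j * v j 0.
Proof.
rewrite /qf mxE; under eq_bigr do rewrite mxE big_distrl.
rewrite exchange_big; apply: eq_bigr => i _; apply: eq_bigr => j _.
by rewrite !mxE.
Qed.

Lemma qf0 n (A : 'M[C]_n) : qf A 0 = 0.
Proof. by rewrite /qf mulmx0 mxE. Qed.

End QuadraticForm.

Section PartialTranspose.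
Variables (C : numClosedFieldType) (d : nat) (pi : 'S_d) (a : 'I_d -> 'M[C]_d).

Lemma ptrans_rho_entry i k j l :
  ptrans (rho_pi pi a) (mxvec_index i k) (mxvec_index j l) =
  \sum_(alpha < d)
    a alpha i j * ((l == addI (pi i) alpha) && (k == addI (pi j) alpha))%:R.
Proof.
rewrite mxE !tidxK /= /rho_pi summxE; apply: eq_bigr => alpha _.
rewrite summxE; under eq_bigr do rewrite summxE.
rewrite [LHS](bigD1 i) //= [X in _ + X]big1 => [|i' ni]; last first.
  rewrite big1 // => j' _; rewrite !mxE !tidxK /= eq_sym (negbTE ni) /=.
  by rewrite !mul0r mulr0.
rewrite addr0 [LHS](bigD1 j) //= [X in _ + X]big1 => [|j' nj]; last first.
  by rewrite !mxE !tidxK /= eq_sym (negbTE nj) andbF !mul0r mulr0.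
by rewrite addr0 !mxE !tidxK /= !eqxx /= mul1r.
Qed.

Lemma qf_ptrans_rho_expand (v : 'cV[C]_(d * d)) :
  qf (ptrans (rho_pi pi a)) v =
  \sum_i \sum_j \sum_(alpha < d) a alpha i j *
    ((v (mxvec_index i (addI (pi j) alpha)) 0)^*
       * v (mxvec_index j (addI (pi i) alpha)) 0).
Proof.
rewrite qfE sum_mxvec; apply: eq_bigr => i _.
under eq_bigr => k _ do rewrite sum_mxvec.
rewrite exchange_big; apply: eq_bigr => j _.
set f := fun alpha k l =>
  (v (mxvec_index i k) 0)^* * a alpha i j * v (mxvec_index j l) 0.
transitivity (\sum_k \sum_l \sum_(alpha < d)
    f alpha k l * ((l == addI (pi i) alpha) && (k == addI (pi j) alpha))%:R).
  apply: eq_bigr => k _; apply: eq_bigr => l _.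
  rewrite ptrans_rho_entry mulr_sumr mulr_suml; apply: eq_bigr => alpha _.
  by rewrite /f -!mulrA; congr (_ * (_ * _)); rewrite mulrC.
rewrite exchange_big; under eq_bigr => k _ do rewrite exchange_big.
rewrite exchange_big; apply: eq_bigr => alpha _.
by rewrite exchange_big (sum2_delta (f alpha)) /f [_^* * _]mulrC mulrA.
Qed.

Definition slice (v : 'cV[C]_(d * d)) (gamma : 'I_d) : 'cV[C]_d :=
  \col_i v (mxvec_index i (addI gamma (d - pi i))) 0.

Lemma qf_ptrans_rho (v : 'cV[C]_(d * d)) :
  qf (ptrans (rho_pi pi a)) v =
  \sum_gamma qf (atilde pi a gamma) (slice v gamma).
Proof.
rewrite qf_ptrans_rho_expand; under [RHS]eq_bigr do rewrite qfE.
rewrite [RHS]exchange_big; under [RHS]eq_bigr do rewrite exchange_big.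
apply: eq_bigr => i _; apply: eq_bigr => j _.
rewrite (reindex _ (onW_bij _ (shift2_bij (pi i) (pi j)))).
apply: eq_bigr => gamma _.
rewrite addI_shift2 addI_shift2r !mxE.
by rewrite mulrCA mulrA.
Qed.

Definition embed (gamma0 : 'I_d) (w : 'cV[C]_d) : 'cV[C]_(d * d) :=
  \col_r (if (tidx r).2 == addI gamma0 (d - pi (tidx r).1)
          then w (tidx r).1 0 else 0).

Lemma slice_embed gamma0 w : slice (embed gamma0 w) gamma0 = w.
Proof. by apply/colP => i; rewrite !mxE tidxK /= eqxx. Qed.

Lemma slice_embed_neq gamma0 gamma w :
  gamma != gamma0 -> slice (embed gamma0 w) gamma = 0.
Proof.
move=> ne; apply/colP => i; rewrite !mxE tidxK /=.
by rewrite (inj_eq (@addI_inj d _)) (negbTE ne).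
Qed.

End PartialTranspose.

Theorem theorem3 (C : numClosedFieldType) (d : nat) (hd : (1 < d)%N)
  (pi : 'S_d) (hpi0 : pi (Ordinal (ltnW hd)) = Ordinal (ltnW hd))
  (a : 'I_d -> 'M[C]_d) (ha : forall alpha, psd (a alpha))
  (htr : \tr (\sum_(alpha < d) a alpha) = 1) :
  psd (ptrans (rho_pi pi a)) <-> (forall gamma : 'I_d, psd (atilde pi a gamma)).
Proof.
split=> [/psdE rhoPPT gamma0 | atildePSD]; apply/psdE.
  (* Test rho_pi^tau against a vector with a single nonzero slice. *)
  move=> w; have := rhoPPT (embed pi gamma0 w).
  rewrite qf_ptrans_rho (bigD1 gamma0) //= slice_embed big1 ?addr0 //.
  by move=> gamma ne; rewrite slice_embed_neq // qf0.
move=> v; rewrite qf_ptrans_rho; apply: sumr_ge0 => gamma _.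
exact: atildePSD.
Qed.
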